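(* Let $(A,B,Z,T)$ be a Hopf-Galois system over a field $k$, with structure maps $\alpha,\beta,\gamma,\delta,S$ as in the context. Then $Z$ is an $A$-$B$-biGalois extension, i.e. the linear maps $$\kappa_l=(1_A\otimes m_Z)\circ(\alpha\otimes 1_Z):Z\otimes Z\to A\otimes Z,\qquad \kappa_r=(m_Z\otimes 1_B)\circ(1_Z\otimes\beta):Z\otimes Z\to Z\otimes B$$ are both bijective.
   Context: All tensor products are over a field $k$; $m_X$, $u_X$ denote multiplication and unit of an algebra $X$, $\Delta_X,\varepsilon_X$ comultiplication and counit of a bialgebra $X$. A Hopf-Galois system consists of four non-zero $k$-algebras $(A,B,Z,T)$ such that: (HG1) $A$ and $B$ are bialgebras; (HG2) $Z$ is an $A$-$B$-bicomodule algebra, with left $A$-coaction $\alpha:Z\to A\otimes Z$ and right $B$-coaction $\beta:Z\to Z\otimes B$ (both algebra morphisms, commuting with each other); (HG3) there are algebra morphisms $\gamma:A\to Z\otimes T$ and $\delta:B\to T\otimes Z$ such that $(\gamma\otimes 1_Z)\circ\alpha=(1_Z\otimes\delta)\circ\beta$, $(\alpha\otimes 1_T)\circ\gamma=(1_A\otimes\gamma)\circ\Delta_A$, and $(1_T\otimes\beta)\circ\delta=(\delta\otimes 1_B)\circ\Delta_B$; (HG4) there is a linear map $S:T\to Z$ such that $m_Z\circ(1_Z\otimes S)\circ\gamma=u_Z\circ\varepsilon_A$ and $m_Z\circ(S\otimes 1_Z)\circ\delta=u_Z\circ\varepsilon_B$. *)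

(* Tensor products over a field k are built concretely:
   V (x) W is the free commutative monoid on symbols v (x) w (lists of pairs,
   up to permutation) modulo the congruence generated by bi-additivity,
   moving scalars across (x), and v (x) 0 = 0 (x) w = 0;  this is the usual
   presentation of V (x)_k W. *)
From HB Require Import structures.
From mathcomp Require Import all_boot all_order all_algebra.
From mathcomp Require Import boolp.
Set Implicit Arguments. Unset Strict Implicit. Unset Printing Implicit Defensive.
Import GRing.Theory.
Local Open Scope ring_scope.
Local Open Scope quotient_scope.

Section Tensor.
Variable k : fieldType.

Section Two.
Variables V W : lmodType k.

Inductive tstep2 : seq (V * W) -> seq (V * W) -> Prop :=
| ts2_addl v v' w : tstep2 [:: (v + v', w)] [:: (v, w); (v', w)]
| ts2_addr v w w' : tstep2 [:: (v, w + w')] [:: (v, w); (v, w')]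
| ts2_scal (c : k) v w : tstep2 [:: (c *: v, w)] [:: (v, c *: w)]
| ts2_zerol w : tstep2 [:: (0, w)] [::]
| ts2_zeror v : tstep2 [:: (v, 0)] [::].

Inductive teq2 : seq (V * W) -> seq (V * W) -> Prop :=
| te2_step s t u x : tstep2 s t -> teq2 (u ++ s ++ x) (u ++ t ++ x)
| te2_perm s t : perm_eq s t -> teq2 s t
| te2_sym s t : teq2 s t -> teq2 t s
| te2_trans s t u : teq2 s t -> teq2 t u -> teq2 s u.

Definition teq2b : rel (seq (V * W)) := fun s t => `[< teq2 s t >].

Lemma teq2b_refl : reflexive teq2b.
Proof. by move=> x; apply/asboolP; apply: te2_perm. Qed.

Lemma teq2b_sym : symmetric teq2b.
Proof.
by move=> x y; apply/idP/idP => /asboolP H; apply/asboolP; apply: te2_sym.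
Qed.

Lemma teq2b_trans : transitive teq2b.
Proof.
move=> y x z /asboolP Hxy /asboolP Hyz; apply/asboolP; exact: te2_trans Hxy Hyz.
Qed.

Definition teq2_rel :=
  EquivRelPack (EquivClass teq2b_refl teq2b_sym teq2b_trans).

Definition tensor2 := {eq_quot teq2_rel}.

Definition tpi2 (s : seq (V * W)) : tensor2 := \pi_tensor2 s.
Definition tpure2 (v : V) (w : W) : tensor2 := tpi2 [:: (v, w)].
Definition tadd2 (s t : tensor2) : tensor2 := tpi2 (repr s ++ repr t).
Definition tscale2 (c : k) (s : tensor2) : tensor2 :=
  tpi2 [seq (c *: p.1, p.2) | p <- repr s].
End Two.

Section Three.
Variables U V W : lmodType k.

Inductive tstep3 : seq (U * V * W) -> seq (U * V * W) -> Prop :=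
| ts3_add1 u u' v w : tstep3 [:: (u + u', v, w)] [:: (u, v, w); (u', v, w)]
| ts3_add2 u v v' w : tstep3 [:: (u, v + v', w)] [:: (u, v, w); (u, v', w)]
| ts3_add3 u v w w' : tstep3 [:: (u, v, w + w')] [:: (u, v, w); (u, v, w')]
| ts3_scal12 (c : k) u v w : tstep3 [:: (c *: u, v, w)] [:: (u, c *: v, w)]
| ts3_scal23 (c : k) u v w : tstep3 [:: (u, c *: v, w)] [:: (u, v, c *: w)]
| ts3_zero1 v w : tstep3 [:: (0, v, w)] [::]
| ts3_zero2 u w : tstep3 [:: (u, 0, w)] [::]
| ts3_zero3 u v : tstep3 [:: (u, v, 0)] [::].

Inductive teq3 : seq (U * V * W) -> seq (U * V * W) -> Prop :=
| te3_step s t u x : tstep3 s t -> teq3 (u ++ s ++ x) (u ++ t ++ x)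
| te3_perm s t : perm_eq s t -> teq3 s t
| te3_sym s t : teq3 s t -> teq3 t s
| te3_trans s t u : teq3 s t -> teq3 t u -> teq3 s u.

Definition teq3b : rel (seq (U * V * W)) := fun s t => `[< teq3 s t >].

Lemma teq3b_refl : reflexive teq3b.
Proof. by move=> x; apply/asboolP; apply: te3_perm. Qed.

Lemma teq3b_sym : symmetric teq3b.
Proof.
by move=> x y; apply/idP/idP => /asboolP H; apply/asboolP; apply: te3_sym.
Qed.

Lemma teq3b_trans : transitive teq3b.
Proof.
move=> y x z /asboolP Hxy /asboolP Hyz; apply/asboolP; exact: te3_trans Hxy Hyz.
Qed.

Definition teq3_rel :=
  EquivRelPack (EquivClass teq3b_refl teq3b_sym teq3b_trans).

Definition tensor3 := {eq_quot teq3_rel}.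
Definition tpi3 (s : seq (U * V * W)) : tensor3 := \pi_tensor3 s.
End Three.

Section TwoAlg.
Variables A B : algType k.
Definition tmul2 (s t : tensor2 A B) : tensor2 A B :=
  tpi2 [seq (p.1 * q.1, p.2 * q.2) | p <- repr s, q <- repr t].
Definition tone2 : tensor2 A B := tpure2 1 1.
End TwoAlg.

(* (f (x) 1_W) : V (x) W -> V1 (x) V2 (x) W  for f : V -> V1 (x) V2 *)
Definition tmap_l (V W V1 V2 : lmodType k) (f : V -> tensor2 V1 V2)
  (s : tensor2 V W) : tensor3 V1 V2 W :=
  tpi3 (flatten [seq [seq (q.1, q.2, p.2) | q <- repr (f p.1)] | p <- repr s]).

(* (1_V (x) g) : V (x) W -> V (x) W1 (x) W2  for g : W -> W1 (x) W2 *)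
Definition tmap_r (V W W1 W2 : lmodType k) (g : W -> tensor2 W1 W2)
  (s : tensor2 V W) : tensor3 V W1 W2 :=
  tpi3 (flatten [seq [seq (p.1, q.1, q.2) | q <- repr (g p.2)] | p <- repr s]).

Definition is_linear_map (V W : lmodType k) (f : V -> W) : Prop :=
  forall (c : k) x y, f (c *: x + y) = c *: f x + f y.

Definition is_alg_morph2 (A B C : algType k) (f : A -> tensor2 B C) : Prop :=
  [/\ forall (c : k) x y, f (c *: x + y) = tadd2 (tscale2 c (f x)) (f y),
      forall x y, f (x * y) = tmul2 (f x) (f y)
    & f 1 = tone2 B C].

Definition is_alg_morph_k (A : algType k) (e : A -> k) : Prop :=
  [/\ forall (c : k) x y, e (c *: x + y) = c * e x + e y,
      forall x y, e (x * y) = e x * e y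
    & e 1 = 1].

Definition is_bialgebra (A : algType k) (D : A -> tensor2 A A) (e : A -> k)
  : Prop :=
  [/\ is_alg_morph2 D, is_alg_morph_k e,
      forall a, tmap_l D (D a) = tmap_r D (D a),
      forall a, \sum_(p <- repr (D a)) e p.1 *: p.2 = a
    &
      forall a, \sum_(p <- repr (D a)) e p.2 *: p.1 = a].

Definition kappa_l (A Z : algType k) (alpha : Z -> tensor2 A Z)
  (s : tensor2 Z Z) : tensor2 A Z :=
  tpi2 (flatten [seq [seq (q.1, q.2 * p.2) | q <- repr (alpha p.1)]
               | p <- repr s]).

Definition kappa_r (B Z : algType k) (beta : Z -> tensor2 Z B)
  (s : tensor2 Z Z) : tensor2 Z B :=
  tpi2 (flatten [seq [seq (p.1 * q.1, q.2) | q <- repr (beta p.2)]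
               | p <- repr s]).

Definition is_hopf_galois_system (A B Z T : algType k)
  (DA : A -> tensor2 A A) (eA : A -> k)
  (DB : B -> tensor2 B B) (eB : B -> k)
  (alpha : Z -> tensor2 A Z) (beta : Z -> tensor2 Z B)
  (gamma : A -> tensor2 Z T) (delta : B -> tensor2 T Z)
  (S : T -> Z) : Prop :=
  [/\
      is_bialgebra DA eA /\ is_bialgebra DB eB,
      (* HG2: Z is an A-B-bicomodule algebra *)
      [/\ is_alg_morph2 alpha /\ is_alg_morph2 beta,
          (forall z, tmap_r alpha (alpha z) = tmap_l DA (alpha z)) /\
          (forall z, \sum_(p <- repr (alpha z)) eA p.1 *: p.2 = z),
          (forall z, tmap_l beta (beta z) = tmap_r DB (beta z)) /\
          (forall z, \sum_(p <- repr (beta z)) eB p.2 *: p.1 = z)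
        &
          forall z, tmap_r beta (alpha z) = tmap_l alpha (beta z)],
      [/\ is_alg_morph2 gamma, is_alg_morph2 delta,
          forall z, tmap_l gamma (alpha z) = tmap_r delta (beta z),
          forall a, tmap_l alpha (gamma a) = tmap_r gamma (DA a)
        & forall b, tmap_r beta (delta b) = tmap_l delta (DB b)]
    &
      [/\ is_linear_map S,
          forall a, \sum_(p <- repr (gamma a)) p.1 * S p.2 = (eA a)%:A
        & forall b, \sum_(p <- repr (delta b)) S p.1 * p.2 = (eB b)%:A]].

End Tensor.

From HB Require Import structures.
From mathcomp Require Import all_boot all_order all_algebra.
From mathcomp Require Import boolp.

(* The inverses of kappa_l and kappa_r are the translation maps
     a (x) z |-> gamma(a)_1 (x) S(gamma(a)_2) z,
     z (x) b |-> z S(delta(b)_1) (x) delta(b)_2.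
   Each of the four cancellations is checked on a pure tensor: the relevant
   identity of (HG3) turns the composite into a map out of a triple tensor
   product, (HG4) contracts two of its legs to a counit, and the counit axiom
   of the coaction or coproduct gives back the original tensor.  Maps out of the tensor products
   are induced by balanced maps through the universal property. *)

Set Implicit Arguments.
Unset Strict Implicit.
Unset Printing Implicit Defensive.
Import GRing.Theory.
Local Open Scope ring_scope.

Section Tensor.
Variable k : fieldType.

Section TensorTwo.
Variables V W : lmodType k.
Implicit Types (s t : seq (V * W)) (x y z : tensor2 V W).
Implicit Types (v : V) (w : W) (c : k).

Lemma teq2_refl s : teq2 s s.
Proof. exact/te2_perm/perm_refl. Qed.

Lemma teq2_step s t : tstep2 s t -> teq2 s t.
Proof. by move=> st; have := te2_step [::] [::] st; rewrite /= !cats0. Qed.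

Lemma teq2_catl u s t : teq2 s t -> teq2 (u ++ s) (u ++ t).
Proof.
elim=> {s t} [s t u' x st | s t st | s t _ IH | s t v _ IH1 _ IH2].
- by have := te2_step (u ++ u') x st; rewrite -!catA.
- by apply: te2_perm; rewrite perm_cat2l.
- exact: te2_sym.
- exact: te2_trans IH1 IH2.
Qed.

Lemma teq2_catC s t : teq2 (s ++ t) (t ++ s).
Proof. by apply: te2_perm; rewrite perm_catC. Qed.

Lemma teq2_cat s s' t t' : teq2 s s' -> teq2 t t' -> teq2 (s ++ t) (s' ++ t').
Proof.
move=> ss' tt'; apply: te2_trans (teq2_catl s tt') _.
apply: te2_trans (teq2_catC _ _) _; apply: te2_trans (teq2_catl t' ss') _.
exact: teq2_catC.
Qed.

Lemma tpi2_eq s t : tpi2 s = tpi2 t <-> teq2 s t.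
Proof. by split=> [/eqmodP/asboolP | st]; last by apply/eqmodP/asboolP. Qed.

Lemma teq2_repr s : teq2 (repr (tpi2 s)) s.
Proof. by apply/tpi2_eq; rewrite /tpi2 reprK. Qed.

Lemma tpi2_repr x : tpi2 (repr x) = x.
Proof. exact: reprK. Qed.

Lemma teq2_oppl s : teq2 ([seq (- p.1, p.2) | p <- s] ++ s) [::].
Proof.
elim: s => [|[v w] s IH] /=; first exact: teq2_refl.
set n := [seq (- p.1, p.2) | p <- s].
apply: (@te2_trans _ _ _ _ ([:: (- v, w); (v, w)] ++ (n ++ s))).
  by apply: te2_perm; rewrite /= perm_cons -cat1s perm_catCA.
rewrite -[[::]]/([::] ++ [::]); apply: teq2_cat IH.
apply: te2_trans (te2_sym (teq2_step (ts2_addl _ _ _))) _.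
by rewrite addNr; apply/teq2_step/ts2_zerol.
Qed.

Definition topp2 x : tensor2 V W := tpi2 [seq (- p.1, p.2) | p <- repr x].

Lemma tadd2_tpi2 s t : tadd2 (tpi2 s) (tpi2 t) = tpi2 (s ++ t).
Proof. by apply/tpi2_eq/teq2_cat; apply: teq2_repr. Qed.

Lemma tadd2A : associative (@tadd2 k V W).
Proof.
move=> x y z; rewrite -[x]tpi2_repr -[y]tpi2_repr -[z]tpi2_repr.
by rewrite !tadd2_tpi2 catA.
Qed.

Lemma tadd2C : commutative (@tadd2 k V W).
Proof. by move=> x y; apply/tpi2_eq/teq2_catC. Qed.

Lemma tadd2_0l : left_id (tpi2 [::]) (@tadd2 k V W).
Proof. by move=> x; rewrite -[x]tpi2_repr tadd2_tpi2. Qed.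

Lemma tadd2_Nl : left_inverse (tpi2 [::]) topp2 (@tadd2 k V W).
Proof.
by move=> x; rewrite -{2}[x]tpi2_repr tadd2_tpi2; apply/tpi2_eq/teq2_oppl.
Qed.

HB.instance Definition _ := Choice.on (tensor2 V W).
HB.instance Definition _ :=
  GRing.isZmodule.Build (tensor2 V W) tadd2A tadd2C tadd2_0l tadd2_Nl.

Lemma tpi2_cat s t : tpi2 (s ++ t) = tpi2 s + tpi2 t.
Proof. by rewrite -tadd2_tpi2. Qed.

Lemma tpi2_nil : tpi2 [::] = 0 :> tensor2 V W.
Proof. by []. Qed.

Lemma tpi2_sum s : tpi2 s = \sum_(p <- s) tpure2 p.1 p.2.
Proof.
elim: s => [|[v w] s IH]; first by rewrite big_nil.
by rewrite -cat1s tpi2_cat big_cons IH.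
Qed.

Lemma tpure2Dl v v' w : tpure2 (v + v') w = tpure2 v w + tpure2 v' w.
Proof. by rewrite -tpi2_cat; apply/tpi2_eq/teq2_step/ts2_addl. Qed.

Lemma tpure2Dr v w w' : tpure2 v (w + w') = tpure2 v w + tpure2 v w'.
Proof. by rewrite -tpi2_cat; apply/tpi2_eq/teq2_step/ts2_addr. Qed.

Lemma tpure2Z c v w : tpure2 (c *: v) w = tpure2 v (c *: w).
Proof. exact/tpi2_eq/teq2_step/ts2_scal. Qed.

Lemma tscale2_1 x : tscale2 1 x = x.
Proof.
rewrite /tscale2 (eq_map (g := id)) ?map_id ?tpi2_repr // => -[v w] /=.
by rewrite scale1r.
Qed.

End TensorTwo.

Section Balanced.
Variables (V W : lmodType k) (M : zmodType).

Definition balanced (phi : V -> W -> M) :=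
  [/\ forall v v' w, phi (v + v') w = phi v w + phi v' w,
      forall v w w', phi v (w + w') = phi v w + phi v w'
    & forall c v w, phi (c *: v) w = phi v (c *: w)].

(* Summing over an arbitrary representative: this is independent of the
   choice only for balanced [phi], see [tensor2_lift_tpi2]. *)
Definition tensor2_lift (phi : V -> W -> M) (x : tensor2 V W) : M :=
  \sum_(p <- repr x) phi p.1 p.2.

Variable phi : V -> W -> M.
Hypothesis phi_bal : balanced phi.

Lemma balanced0l w : phi 0 w = 0.
Proof.
by case: phi_bal => Dl _ _; apply: (@addrI _ (phi 0 w)); rewrite -Dl !addr0.
Qed.

Lemma balanced0r v : phi v 0 = 0.
Proof.
by case: phi_bal => _ Dr _; apply: (@addrI _ (phi v 0)); rewrite -Dr !addr0.
Qed.

Lemma teq2_big s t : teq2 s t ->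
  \sum_(p <- s) phi p.1 p.2 = \sum_(p <- t) phi p.1 p.2.
Proof.
case: phi_bal => Dl Dr Z.
elim=> {s t} [s t u x st | s t st | s t _ -> | s t u _ -> _ ->] //; last first.
  exact: perm_big.
rewrite !big_cat; congr (_ + (_ + _)).
by case: st => *; rewrite !big_cons !big_nil /= ?addr0 ?Dl ?Dr ?Z
  ?balanced0l ?balanced0r.
Qed.

Lemma tensor2_lift_tpi2 s :
  tensor2_lift phi (tpi2 s) = \sum_(p <- s) phi p.1 p.2.
Proof. exact/teq2_big/teq2_repr. Qed.

Lemma tensor2_lift_pure v w : tensor2_lift phi (tpure2 v w) = phi v w.
Proof. by rewrite tensor2_lift_tpi2 big_seq1. Qed.

Lemma tensor2_liftD x y :
  tensor2_lift phi (x + y) = tensor2_lift phi x + tensor2_lift phi y.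
Proof. by rewrite [x + y]/(tadd2 x y) tensor2_lift_tpi2 big_cat. Qed.

Lemma tensor2_lift_sum I (r : seq I) (F : I -> tensor2 V W) :
  tensor2_lift phi (\sum_(i <- r) F i) = \sum_(i <- r) tensor2_lift phi (F i).
Proof.
apply: (big_morph _ tensor2_liftD).
by rewrite -tpi2_nil tensor2_lift_tpi2 big_nil.
Qed.

Lemma tensor2_lift_scale c x :
  tensor2_lift phi (tscale2 c x) = \sum_(p <- repr x) phi (c *: p.1) p.2.
Proof. by rewrite tensor2_lift_tpi2 big_map. Qed.

End Balanced.

Lemma tpure2_balanced (V W : lmodType k) : balanced (@tpure2 k V W).
Proof. by split; [apply: tpure2Dl | apply: tpure2Dr | apply: tpure2Z]. Qed.

Section PureSums.
Variables (V W : lmodType k) (I : Type) (r : seq I).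

Lemma tpure2_suml (F : I -> V) (w : W) :
  tpure2 (\sum_(i <- r) F i) w = \sum_(i <- r) tpure2 (F i) w.
Proof.
apply: (big_morph (fun v => tpure2 v w)) => [v v' | ]; first exact: tpure2Dl.
exact: balanced0l (tpure2_balanced V W) w.
Qed.

Lemma tpure2_sumr (v : V) (F : I -> W) :
  tpure2 v (\sum_(i <- r) F i) = \sum_(i <- r) tpure2 v (F i).
Proof.
apply: (big_morph (tpure2 v)) => [w w' | ]; first exact: tpure2Dr.
exact: balanced0r (tpure2_balanced V W) v.
Qed.

End PureSums.

Lemma tensor2_lift_tpure2 (V W : lmodType k) (x : tensor2 V W) :
  tensor2_lift (@tpure2 k V W) x = x.
Proof. by rewrite -[RHS]tpi2_repr tpi2_sum. Qed.

Lemma tensor2_lift_cancel (V W V' W' : lmodType k)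
    (phi : V -> W -> tensor2 V' W') (chi : V' -> W' -> tensor2 V W) :
    balanced chi -> (forall v w, tensor2_lift chi (phi v w) = tpure2 v w) ->
  cancel (tensor2_lift phi) (tensor2_lift chi).
Proof.
move=> chi_bal phiK x; rewrite [tensor2_lift phi x]/tensor2_lift.
rewrite tensor2_lift_sum //; under eq_bigr do rewrite phiK.
exact: tensor2_lift_tpure2.
Qed.

Section Balanced3.
Variables (U V W : lmodType k) (M : zmodType).

Definition balanced3 (psi : U -> V -> W -> M) :=
  [/\ forall u u' v w, psi (u + u') v w = psi u v w + psi u' v w,
      forall u v v' w, psi u (v + v') w = psi u v w + psi u v' w,
      forall u v w w', psi u v (w + w') = psi u v w + psi u v w',
      forall c u v w, psi (c *: u) v w = psi u (c *: v) w
    & forall c u v w, psi u (c *: v) w = psi u v (c *: w)].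

Definition tensor3_lift (psi : U -> V -> W -> M) (x : tensor3 U V W) : M :=
  \sum_(p <- repr x) psi p.1.1 p.1.2 p.2.

Variable psi : U -> V -> W -> M.
Hypothesis psi_bal : balanced3 psi.

Lemma teq3_big s t : teq3 s t ->
  \sum_(p <- s) psi p.1.1 p.1.2 p.2 = \sum_(p <- t) psi p.1.1 p.1.2 p.2.
Proof.
case: psi_bal => D1 D2 D3 Z12 Z23.
have Z1 v w : psi 0 v w = 0.
  by apply: (@addrI _ (psi 0 v w)); rewrite -D1 !addr0.
have Z2 u w : psi u 0 w = 0.
  by apply: (@addrI _ (psi u 0 w)); rewrite -D2 !addr0.
have Z3 u v : psi u v 0 = 0.
  by apply: (@addrI _ (psi u v 0)); rewrite -D3 !addr0.
elim=> {s t} [s t u x st | s t st | s t _ -> | s t u _ -> _ ->] //; last first.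
  exact: perm_big.
rewrite !big_cat; congr (_ + (_ + _)).
by case: st => *; rewrite !big_cons !big_nil /= ?addr0 ?D1 ?D2 ?D3 ?Z12 ?Z23
  ?Z1 ?Z2 ?Z3.
Qed.

Lemma tensor3_lift_tpi3 s :
  tensor3_lift psi (tpi3 s) = \sum_(p <- s) psi p.1.1 p.1.2 p.2.
Proof.
apply: teq3_big; have : tpi3 (repr (tpi3 s)) = tpi3 s by rewrite /tpi3 reprK.
by move/eqmodP/asboolP.
Qed.

Lemma tensor3_lift_tmap_l (X : lmodType k) (f : X -> tensor2 U V)
    (x : tensor2 X W) : tensor3_lift psi (tmap_l f x) =
  \sum_(p <- repr x) \sum_(q <- repr (f p.1)) psi q.1 q.2 p.2.
Proof.
rewrite tensor3_lift_tpi3 big_flatten big_map.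
by apply: eq_bigr => p _; rewrite big_map.
Qed.

Lemma tensor3_lift_tmap_r (X : lmodType k) (f : X -> tensor2 V W)
    (x : tensor2 U X) : tensor3_lift psi (tmap_r f x) =
  \sum_(p <- repr x) \sum_(q <- repr (f p.2)) psi p.1 q.1 q.2.
Proof.
rewrite tensor3_lift_tpi3 big_flatten big_map.
by apply: eq_bigr => p _; rewrite big_map.
Qed.

End Balanced3.

Section LinearMap.
Variables (U V W : lmodType k) (f : U -> V).
Hypothesis f_lin : is_linear_map f.

Lemma linear_mapD x y : f (x + y) = f x + f y.
Proof. by have := f_lin 1 x y; rewrite !scale1r. Qed.

Lemma linear_map0 : f 0 = 0.
Proof. by apply: (@addrI _ (f 0)); rewrite -linear_mapD !addr0. Qed.

Lemma linear_mapZ c x : f (c *: x) = c *: f x.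
Proof. by have := f_lin c x 0; rewrite !addr0 linear_map0 addr0. Qed.

Lemma linear_map_comp (g : V -> W) :
  is_linear_map g -> is_linear_map (g \o f).
Proof. by move=> g_lin c x y /=; rewrite (f_lin c x y) (g_lin c). Qed.

End LinearMap.

Definition bilinear_map (U V W : lmodType k) (mu : U -> V -> W) :=
  (forall v, is_linear_map (mu^~ v)) /\ (forall u, is_linear_map (mu u)).

Section BilinearMap.
Variables (U V W : lmodType k) (mu : U -> V -> W).
Hypothesis mu_bil : bilinear_map mu.

Lemma bilinearDl u u' v : mu (u + u') v = mu u v + mu u' v.
Proof. exact: linear_mapD (mu_bil.1 v) u u'. Qed.

Lemma bilinearDr u v v' : mu u (v + v') = mu u v + mu u v'.
Proof. exact: linear_mapD (mu_bil.2 u) v v'. Qed.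

Lemma bilinearZl c u v : mu (c *: u) v = c *: mu u v.
Proof. exact: linear_mapZ (mu_bil.1 v) c u. Qed.

Lemma bilinearZr c u v : mu u (c *: v) = c *: mu u v.
Proof. exact: linear_mapZ (mu_bil.2 u) c v. Qed.

Lemma bilinear_map_linl (X : lmodType k) (f : X -> U) :
  is_linear_map f -> bilinear_map (fun x v => mu (f x) v).
Proof.
move=> f_lin; split=> [v | x]; last exact: mu_bil.2.
exact: (linear_map_comp f_lin (mu_bil.1 v)).
Qed.

Lemma bilinear_map_linr (X : lmodType k) (g : X -> V) :
  is_linear_map g -> bilinear_map (fun u x => mu u (g x)).
Proof.
move=> g_lin; split=> [x | u]; first exact: mu_bil.1.
exact: (linear_map_comp g_lin (mu_bil.2 u)).
Qed.

Lemma tpure2_balanced3_r (X : lmodType k) :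
  balanced3 (fun (x : X) u v => tpure2 x (mu u v)).
Proof.
split=> *; rewrite ?tpure2Dl ?bilinearDl ?bilinearDr ?tpure2Dr //.
  by rewrite tpure2Z bilinearZl.
by rewrite bilinearZl bilinearZr.
Qed.

Lemma tpure2_balanced3_l (X : lmodType k) :
  balanced3 (fun u v (x : X) => tpure2 (mu u v) x).
Proof.
split=> *; rewrite ?tpure2Dr ?bilinearDl ?bilinearDr ?tpure2Dl //.
  by rewrite bilinearZl bilinearZr.
by rewrite -tpure2Z bilinearZr.
Qed.

End BilinearMap.

Lemma mulr_bilinear (A : algType k) : bilinear_map ( *%R : A -> A -> A).
Proof.
by split=> a c x y /=; rewrite ?mulrDl ?mulrDr -?scalerAl -?scalerAr.
Qed.

Lemma tpure2_balanced_linl (U V W : lmodType k) (f : U -> V) :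
  is_linear_map f -> balanced (fun u (w : W) => tpure2 (f u) w).
Proof.
move=> f_lin; split=> *; rewrite ?linear_mapD ?tpure2Dl ?tpure2Dr //.
by rewrite linear_mapZ // tpure2Z.
Qed.

Lemma tpure2_balanced_linr (U V W : lmodType k) (f : V -> W) :
  is_linear_map f -> balanced (fun (u : U) v => tpure2 u (f v)).
Proof.
move=> f_lin; split=> *; rewrite ?linear_mapD ?tpure2Dl ?tpure2Dr //.
by rewrite linear_mapZ // tpure2Z.
Qed.

Section TensorLinear.
Variables (X U V : lmodType k) (f : X -> tensor2 U V).

Definition tlinear := forall c x y, f (c *: x + y) = tscale2 c (f x) + f y.

Hypothesis f_lin : tlinear.

Lemma tlinearD x y : f (x + y) = f x + f y.
Proof. by have := f_lin 1 x y; rewrite scale1r tscale2_1. Qed.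

Lemma tlinearZ c x : f (c *: x) = tscale2 c (f x).
Proof.
have f0 : f 0 = 0 by apply: (@addrI _ (f 0)); rewrite -tlinearD !addr0.
by have := f_lin c x 0; rewrite !addr0 f0 addr0.
Qed.

End TensorLinear.

Section GaloisMaps.
Variables (X Y U V W : lmodType k).

(* In Sweedler notation, [lgalois f mu x y = f(x)_1 (x) mu f(x)_2 y] and
   [rgalois f mu y x = mu y f(x)_1 (x) f(x)_2]. *)
Definition lgalois (f : X -> tensor2 U V) (mu : V -> Y -> W) x y :
    tensor2 U W :=
  tensor2_lift (fun u v => tpure2 u (mu v y)) (f x).

Definition rgalois (f : X -> tensor2 U V) (mu : Y -> U -> W) y x :
    tensor2 W V :=
  tensor2_lift (fun u v => tpure2 (mu y u) v) (f x).

Lemma lgalois_balanced f mu :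
  tlinear f -> bilinear_map mu -> balanced (lgalois f mu).
Proof.
move=> f_lin mu_bil; have phi_bal y := tpure2_balanced_linr U (mu_bil.1 y).
split=> [x x' y | x y y' | c x y]; rewrite /lgalois.
- by rewrite tlinearD // tensor2_liftD.
- rewrite /tensor2_lift -big_split; apply: eq_bigr => p _.
  by rewrite bilinearDr // tpure2Dr.
- rewrite tlinearZ // tensor2_lift_scale // /tensor2_lift.
  by apply: eq_bigr => p _; rewrite tpure2Z bilinearZr.
Qed.

Lemma rgalois_balanced f mu :
  tlinear f -> bilinear_map mu -> balanced (rgalois f mu).
Proof.
move=> f_lin mu_bil; have phi_bal y := tpure2_balanced_linl V (mu_bil.2 y).
split=> [y y' x | y x x' | c y x]; rewrite /rgalois.
- rewrite /tensor2_lift -big_split; apply: eq_bigr => p _.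
  by rewrite bilinearDl // tpure2Dl.
- by rewrite tlinearD // tensor2_liftD.
- rewrite tlinearZ // tensor2_lift_scale // /tensor2_lift.
  by apply: eq_bigr => p _; rewrite bilinearZl // bilinearZr.
Qed.

End GaloisMaps.

Section GaloisComposition.
Variables (X Y U V W U' V' W' : lmodType k).

Lemma lgalois_lgalois (f : X -> tensor2 U V) (g : U -> tensor2 U' V')
    (mu : V -> Y -> W) (nu : V' -> W -> W') x y :
    tlinear g -> bilinear_map mu -> bilinear_map nu ->
  tensor2_lift (lgalois g nu) (lgalois f mu x y) =
  tensor3_lift (fun u v w => tpure2 u (nu v (mu w y))) (tmap_l g (f x)).
Proof.
move=> g_lin mu_bil nu_bil.
rewrite tensor3_lift_tmap_l; last first.
  exact/tpure2_balanced3_r/bilinear_map_linr/(mu_bil.1 y).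
rewrite [lgalois f mu x y]/lgalois [tensor2_lift _ (f x)]/tensor2_lift.
rewrite tensor2_lift_sum; last exact: lgalois_balanced.
by apply: eq_bigr => p _; rewrite tensor2_lift_pure //; apply: lgalois_balanced.
Qed.

Lemma rgalois_rgalois (f : X -> tensor2 U V) (g : V -> tensor2 U' V')
    (mu : Y -> U -> W) (nu : W -> U' -> W') y x :
    tlinear g -> bilinear_map mu -> bilinear_map nu ->
  tensor2_lift (rgalois g nu) (rgalois f mu y x) =
  tensor3_lift (fun u v w => tpure2 (nu (mu y u) v) w) (tmap_r g (f x)).
Proof.
move=> g_lin mu_bil nu_bil.
rewrite tensor3_lift_tmap_r; last first.
  exact/tpure2_balanced3_l/bilinear_map_linl/(mu_bil.2 y).
rewrite [rgalois f mu y x]/rgalois [tensor2_lift _ (f x)]/tensor2_lift.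
rewrite tensor2_lift_sum; last exact: rgalois_balanced.
by apply: eq_bigr => p _; rewrite tensor2_lift_pure //; apply: rgalois_balanced.
Qed.

End GaloisComposition.

Section Counit.
Variables (U V U' V' Y : lmodType k).

Lemma tensor3_lift_counit_r (g : V -> tensor2 U' V') (rho : U' -> V' -> Y)
    (e : V -> k) (y : Y) (t : tensor2 U V) (rho_bil : bilinear_map rho) :
    (forall v, \sum_(q <- repr (g v)) rho q.1 q.2 = e v *: y) ->
  tensor3_lift (fun u v w => tpure2 u (rho v w)) (tmap_r g t) =
  tpure2 (\sum_(p <- repr t) e p.2 *: p.1) y.
Proof.
move=> rhoE; rewrite tensor3_lift_tmap_r; last exact: tpure2_balanced3_r.
rewrite tpure2_suml; apply: eq_bigr => p _.
by rewrite -tpure2_sumr rhoE tpure2Z.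
Qed.

Lemma tensor3_lift_counit_l (g : U -> tensor2 U' V') (rho : U' -> V' -> Y)
    (e : U -> k) (y : Y) (t : tensor2 U V) (rho_bil : bilinear_map rho) :
    (forall u, \sum_(q <- repr (g u)) rho q.1 q.2 = e u *: y) ->
  tensor3_lift (fun u v w => tpure2 (rho u v) w) (tmap_l g t) =
  tpure2 y (\sum_(p <- repr t) e p.1 *: p.2).
Proof.
move=> rhoE; rewrite tensor3_lift_tmap_l; last exact: tpure2_balanced3_l.
rewrite tpure2_sumr; apply: eq_bigr => p _.
by rewrite -tpure2_suml rhoE tpure2Z.
Qed.

End Counit.

Lemma kappa_lE (A Z : algType k) (alpha : Z -> tensor2 A Z) :
  kappa_l alpha = tensor2_lift (lgalois alpha *%R).
Proof.
apply/funext => x; rewrite /kappa_l tpi2_sum big_flatten big_map.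
by apply: eq_bigr => p _; rewrite big_map.
Qed.

Lemma kappa_rE (B Z : algType k) (beta : Z -> tensor2 Z B) :
  kappa_r beta = tensor2_lift (rgalois beta *%R).
Proof.
apply/funext => x; rewrite /kappa_r tpi2_sum big_flatten big_map.
by apply: eq_bigr => p _; rewrite big_map.
Qed.

Section BiGalois.
Variables (A B Z : algType k) (T : lmodType k).
Variables (DA : A -> tensor2 A A) (eA : A -> k).
Variables (DB : B -> tensor2 B B) (eB : B -> k).
Variables (alpha : Z -> tensor2 A Z) (beta : Z -> tensor2 Z B).
Variables (gamma : A -> tensor2 Z T) (delta : B -> tensor2 T Z) (S : T -> Z).
Hypothesis S_lin : is_linear_map S.
Hypothesis gamma_alpha :
  forall z, tmap_l gamma (alpha z) = tmap_r delta (beta z).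
Hypothesis gamma_S :
  forall a, \sum_(p <- repr (gamma a)) p.1 * S p.2 = (eA a)%:A.
Hypothesis delta_S :
  forall b, \sum_(p <- repr (delta b)) S p.1 * p.2 = (eB b)%:A.

Let mul_bil := mulr_bilinear Z.
Let mulSl_bil : bilinear_map (fun t z => S t * z) :=
  bilinear_map_linl mul_bil S_lin.
Let mulSr_bil : bilinear_map (fun z t => z * S t) :=
  bilinear_map_linr mul_bil S_lin.

Lemma kappa_l_bijective :
    tlinear alpha -> tlinear gamma ->
    (forall a, tmap_l alpha (gamma a) = tmap_r gamma (DA a)) ->
    (forall a, \sum_(p <- repr (DA a)) eA p.2 *: p.1 = a) ->
    (forall z, \sum_(p <- repr (beta z)) eB p.2 *: p.1 = z) ->
  bijective (kappa_l alpha).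
Proof.
move=> alpha_lin gamma_lin alpha_gamma DA_counit beta_counit.
rewrite kappa_lE; exists (tensor2_lift (lgalois gamma (fun t z => S t * z))).
- apply: tensor2_lift_cancel; first exact: lgalois_balanced.
  move=> x y; rewrite lgalois_lgalois // gamma_alpha.
  have rho_bil := bilinear_map_linr mulSl_bil (mul_bil.1 y).
  rewrite (tensor3_lift_counit_r (e := eB) (y := y) _ rho_bil) ?beta_counit //.
  move=> b; under eq_bigr do rewrite mulrA.
  by rewrite -big_distrl /= delta_S mulr_algl.
- apply: tensor2_lift_cancel; first exact: lgalois_balanced.
  move=> a z; rewrite lgalois_lgalois // alpha_gamma.
  have rho_bil := bilinear_map_linr mul_bil (mulSl_bil.1 z).
  rewrite (tensor3_lift_counit_r (e := eA) (y := z) _ rho_bil) ?DA_counit //.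
  move=> a'; under eq_bigr do rewrite mulrA.
  by rewrite -big_distrl /= gamma_S mulr_algl.
Qed.

Lemma kappa_r_bijective :
    tlinear beta -> tlinear delta ->
    (forall b, tmap_r beta (delta b) = tmap_l delta (DB b)) ->
    (forall b, \sum_(p <- repr (DB b)) eB p.1 *: p.2 = b) ->
    (forall z, \sum_(p <- repr (alpha z)) eA p.1 *: p.2 = z) ->
  bijective (kappa_r beta).
Proof.
move=> beta_lin delta_lin beta_delta DB_counit alpha_counit.
rewrite kappa_rE; exists (tensor2_lift (rgalois delta (fun z t => z * S t))).
- apply: tensor2_lift_cancel; first exact: rgalois_balanced.
  move=> x y; rewrite rgalois_rgalois // -gamma_alpha.
  have rho_bil := bilinear_map_linl mulSr_bil (mul_bil.2 x).
  rewrite (tensor3_lift_counit_l (e := eA) (y := x) _ rho_bil) ?alpha_counit //.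
  move=> a; under eq_bigr do rewrite -mulrA.
  by rewrite -big_distrr /= gamma_S mulr_algr.
- apply: tensor2_lift_cancel; first exact: rgalois_balanced.
  move=> z b; rewrite rgalois_rgalois // beta_delta.
  have rho_bil := bilinear_map_linl mul_bil (mulSr_bil.2 z).
  rewrite (tensor3_lift_counit_l (e := eB) (y := z) _ rho_bil) ?DB_counit //.
  move=> b'; under eq_bigr do rewrite -mulrA.
  by rewrite -big_distrr /= delta_S mulr_algr.
Qed.

End BiGalois.

End Tensor.

Theorem theorem1p2 (k : fieldType) (A B Z T : algType k)
  (DA : A -> tensor2 A A) (eA : A -> k)
  (DB : B -> tensor2 B B) (eB : B -> k)
  (alpha : Z -> tensor2 A Z) (beta : Z -> tensor2 Z B)
  (gamma : A -> tensor2 Z T) (delta : B -> tensor2 T Z)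
  (S : T -> Z) :
  is_hopf_galois_system DA eA DB eB alpha beta gamma delta S ->
  bijective (kappa_l alpha) /\ bijective (kappa_r beta).
Proof.
case=> [[[_ _ _ _ DA_counit] [_ _ _ DB_counit _]]
        [[[alpha_lin _ _] [beta_lin _ _]] [_ alpha_counit] [_ beta_counit] _]
        [[gamma_lin _ _] [delta_lin _ _] gamma_alpha alpha_gamma beta_delta]
        [S_lin gamma_S delta_S]].
split.
- exact: (kappa_l_bijective S_lin gamma_alpha gamma_S delta_S
            alpha_lin gamma_lin alpha_gamma DA_counit beta_counit).
- exact: (kappa_r_bijective S_lin gamma_alpha gamma_S delta_S
            beta_lin delta_lin beta_delta DB_counit alpha_counit).
Qed.
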